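(* If $T\in\mathcal{T}$, then $C_T=\emptyset$, $A_T$ is an independent set, every vertex of $A_T$ has degree exactly $3$ in $T$, and $\nu(T)=|A_T|$. In particular $T$ is bipartite with partite sets $A_T$ and $D_T$.
   Context: Gallai–Edmonds sets: for a graph $G$, $D_G$ is the set of vertices not covered by at least one maximum matching, $A_G=N_G(D_G)\setminus D_G$, $C_G=V(G)\setminus(A_G\cup D_G)$. $\nu$ denotes the matching number, $n(T)$ the number of vertices. $\mathcal{T}$ is the set of all trees $T$ such that every vertex of $A_T$ has degree at most $3$ in $T$ and $\nu(T)=\frac{n(T)-1}{3}$. *)

From mathcomp Require Import all_boot.
Set Implicit Arguments. Unset Strict Implicit. Unset Printing Implicit Defensive.

Section Graph.
Variables (V : finType) (e : rel V).

Definition simple_graph : Prop := symmetric e /\ irreflexive e.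

Definition is_tree : Prop :=
  [/\ simple_graph,
      (forall x y : V, connect e x y) &
      (forall c : seq V, 3 <= size c -> ~~ ucycleb e c)].

Definition deg (v : V) : nat := #|[set u | e v u]|.

Definition is_matching (M : {set {set V}}) : bool :=
  [forall E in M, exists x, exists y, e x y && (E == [set x; y])] &&
  [forall E in M, forall F in M, (E != F) ==> [disjoint E & F]].

Definition nu : nat := \max_(M : {set {set V}} | is_matching M) #|M|.

Definition is_max_matching (M : {set {set V}}) : bool :=
  is_matching M && (#|M| == nu).

Definition covered (M : {set {set V}}) : {set V} := cover M.

Definition GE_D : {set V} :=
  [set v | [exists M, is_max_matching M && (v \notin covered M)]].
Definition GE_A : {set V} :=
  [set v | (v \notin GE_D) && [exists u in GE_D, e u v]].
Definition GE_C : {set V} := ~: (GE_A :|: GE_D).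

Definition independent (S : {set V}) : Prop :=
  forall x y, x \in S -> y \in S -> ~~ e x y.

Definition in_calT : Prop :=
  [/\ is_tree,
      (forall v, v \in GE_A -> deg v <= 3) &
      3 * nu + 1 = #|V|].

End Graph.

From mathcomp Require Import all_boot.
From Stdlib Require Import Lia.
From mathcomp Require Import zify.
Set Implicit Arguments. Unset Strict Implicit. Unset Printing Implicit Defensive.

(* The proof has three ingredients.
   1. Switching.  If M and N are maximum matchings and K is a connected
      component of their symmetric difference, exchanging M for N inside K
      yields another maximum matching.  In a forest this shows that D is
      independent ([D_independent]) and that every maximum matching matches
      each vertex of A with a vertex of D ([mate_A_in_D]).
   2. Counting.  A maximum matching covers every vertex outside D and matches
      A bijectively onto the covered vertices of D, so
      2 nu + |D| = |A| + n  ([matching_count]).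
   3. Rooting the tree at a vertex r of D, every d in D \ {r} is a child of a
      vertex of A, and each a in A has at most two children because its parent
      is a third neighbour; hence |D| <= 2|A| + 1  ([card_D_le]).
   With n = |A| + |D| + |C| and 3 nu + 1 = n these bounds are all tight: C is
   empty, nu = |A|, and every a in A has exactly two children, all in D, so
   that deg a = 3 and A is independent. *)

Lemma disjoint_memP (T : finType) (A B : {set T}) :
  reflect (forall x, x \in A -> x \in B -> False) [disjoint A & B].
Proof.
rewrite disjoint_subset; apply: (iffP subsetP) => H x xA.
  by move=> xB; move: (H x xA); rewrite inE xB.
by rewrite inE; apply/negP => /(H x xA).
Qed.

Section Matchings.
Variables (V : finType) (e : rel V).
Hypotheses (esym : symmetric e) (eirr : irreflexive e).

Lemma is_matchingP M : is_matching e M <->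
  (forall E, E \in M -> exists x y, e x y /\ E = [set x; y]) /\
  (forall E F, E \in M -> F \in M -> E != F -> [disjoint E & F]).
Proof.
rewrite /is_matching; split.
  move=> /andP[/forallP H1 /forallP H2]; split.
    move=> E EM; move: (H1 E); rewrite EM /=.
    by move=> /existsP[x /existsP[y /andP[exy /eqP ->]]]; exists x, y.
  move=> E F EM FM EF; move: (H2 E); rewrite EM /= => /forallP/(_ F).
  by rewrite FM EF.
move=> [H1 H2]; apply/andP; split; apply/forallP => E; apply/implyP => EM.
  have [x [y [exy ->]]] := H1 E EM.
  by apply/existsP; exists x; apply/existsP; exists y; rewrite exy eqxx.
by apply/forallP => F; apply/implyP => FM; apply/implyP => EF; apply: H2.
Qed.

Lemma matching_le M : is_matching e M -> #|M| <= nu e.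
Proof. by move=> H; apply: leq_bigmax_cond. Qed.

Lemma max_matching_exists : exists M, is_matching e M /\ #|M| = nu e.
Proof.
have : 0 < #|[pred M : {set {set V}} | is_matching e M]|.
  apply/card_gt0P; exists set0; rewrite inE /is_matching.
  by apply/andP; split; apply/forallP => E; rewrite inE.
move/(eq_bigmax_cond (fun M : {set {set V}} => #|M|)) => [M HM Hnu].
by exists M; rewrite inE in HM; split.
Qed.

Lemma cover_notin_D M v : is_matching e M -> #|M| = nu e ->
  v \notin GE_D e -> v \in cover M.
Proof.
move=> Mm cM; apply: contraR => vM; rewrite inE; apply/existsP; exists M.
by rewrite /is_max_matching Mm cM eqxx.
Qed.

Lemma GE_DP v : v \in GE_D e ->
  exists M, [/\ is_matching e M, #|M| = nu e & v \notin cover M].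
Proof.
by rewrite inE => /existsP[M /andP[/andP[Mm /eqP cM] vM]]; exists M.
Qed.

Section OneMatching.
Variable M : {set {set V}}.
Hypothesis Mm : is_matching e M.

Lemma matching_meet E F x : E \in M -> F \in M -> x \in E -> x \in F -> E = F.
Proof.
move=> EM FM xE xF; apply/eqP; apply/negPn/negP => EF.
have := (proj2 (proj1 (is_matchingP M) Mm)) E F EM FM EF.
by move/disjoint_memP/(_ x xE xF).
Qed.

Lemma matching_edge_at E x : E \in M -> x \in E ->
  exists y, e x y /\ E = [set x; y].
Proof.
move=> EM xE; have [a [b [eab Eab]]] := (proj1 (proj1 (is_matchingP M) Mm)) E EM.
move: xE; rewrite Eab !inE => /orP[/eqP->|/eqP->]; first by exists b.
by exists a; rewrite setUC esym.
Qed.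

Lemma matching_edge x y : [set x; y] \in M -> e x y.
Proof.
move=> H; have [z [exz Ez]] := matching_edge_at H (set21 x y).
have : y \in [set x; z] by rewrite -Ez set22.
rewrite !inE => /orP[/eqP yx|/eqP->] //.
have : z \in [set x; y] by rewrite Ez set22.
by rewrite yx !inE orbb => /eqP zx; move: exz; rewrite zx eirr.
Qed.

(* The partner of a covered vertex in M (a vertex is its own mate otherwise). *)
Definition mate x := odflt x [pick y | [set x; y] \in M].

Lemma mate_eq x y : [set x; y] \in M -> mate x = y.
Proof.
move=> H; rewrite /mate; case: pickP => [y' H'|/(_ y)]; last by rewrite H.
have E := matching_meet H H' (set21 x y) (set21 x y').
have : y' \in [set x; y] by rewrite E set22.
rewrite !inE => /orP[/eqP y'x|/eqP //].
by move: (matching_edge H'); rewrite y'x eirr.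
Qed.

Lemma mateP x : x \in cover M -> [set x; mate x] \in M.
Proof.
move=> /bigcupP[E EM xE]; have [y [_ Exy]] := matching_edge_at EM xE.
by rewrite (mate_eq (y := y)) -?Exy.
Qed.

Lemma mateK x : x \in cover M -> mate (mate x) = x.
Proof. by move=> /mateP H; apply: mate_eq; rewrite setUC. Qed.

Lemma mate_cover x : x \in cover M -> mate x \in cover M.
Proof. by move=> /mateP H; apply/bigcupP; exists [set x; mate x]; rewrite ?set22. Qed.

Lemma card_cover : #|cover M| = 2 * #|M|.
Proof.
have tM : trivIset M.
  by apply/trivIsetP => E F EM FM; apply: (proj2 (proj1 (is_matchingP M) Mm)).
rewrite -(eqP tM) mulnC -sum_nat_const; apply: eq_bigr => E EM.
have [x [y [exy ->]]] := (proj1 (proj1 (is_matchingP M) Mm)) E EM.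
by rewrite cards2; case: eqP exy => // ->; rewrite eirr.
Qed.

Lemma add_edge x y : e x y -> x \notin cover M -> y \notin cover M ->
  is_matching e ([set x; y] |: M) /\ #|[set x; y] |: M| = #|M|.+1.
Proof.
move=> exy xM yM; have nin : [set x; y] \notin M.
  by apply: contra xM => H; apply/bigcupP; exists [set x; y]; rewrite ?set21.
split; last by rewrite cardsU1 nin.
move/is_matchingP: Mm => [M1 M2]; apply/is_matchingP; split.
  by move=> E; rewrite !inE => /orP[/eqP->|/M1//]; exists x, y.
have new F : F \in M -> [disjoint [set x; y] & F].
  move=> FM; apply/disjoint_memP => z; rewrite !inE => /orP[]/eqP-> zF.
    by move/negP: xM; apply; apply/bigcupP; exists F.
  by move/negP: yM; apply; apply/bigcupP; exists F.
move=> E F; rewrite !inE => /orP[/eqP->|EM] /orP[/eqP->|FM]; rewrite ?eqxx //.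
- by move=> _; apply: new.
- by move=> _; rewrite disjoint_sym; apply: new.
- exact: M2.
Qed.

End OneMatching.

Lemma replace_edge M a x d : is_matching e M -> [set a; x] \in M -> e a d -> d \notin cover M ->
  [/\ is_matching e ([set a; d] |: (M :\ [set a; x])),
      #|[set a; d] |: (M :\ [set a; x])| = #|M| &
      x \notin cover ([set a; d] |: (M :\ [set a; x]))].
Proof.
move=> Mm axM ead dM; set M' := M :\ [set a; x].
have M'm : is_matching e M'.
  move/is_matchingP: Mm => [M1 M2]; apply/is_matchingP; split.
    by move=> E; rewrite !inE => /andP[_ /M1].
  by move=> E F; rewrite !inE => /andP[_ EM] /andP[_ FM]; apply: M2.
have aM' : a \notin cover M'.
  apply/negP => /bigcupP[E]; rewrite !inE => /andP[EN EM] aE.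
  by move/negP: EN; apply; apply/eqP; apply: (matching_meet Mm EM axM aE (set21 a x)).
have dM' : d \notin cover M'.
  apply: contra dM => /bigcupP[E]; rewrite !inE => /andP[_ EM] dE.
  by apply/bigcupP; exists E.
have [H1 H2] := add_edge M'm ead aM' dM'.
have xd : x != d.
  apply: contra dM => /eqP <-; apply/bigcupP.
  by exists [set a; x]; rewrite // set22.
have xa : x != a by apply: contraTneq (matching_edge Mm axM) => ->; rewrite eirr.
split => //; first by rewrite H2 (cardsD1 [set a; x] M) axM.
apply/negP => /bigcupP[E]; rewrite !inE => /orP[/eqP->|/andP[EN EM]].
  by rewrite !inE (negbTE xa) (negbTE xd).
move=> xE; move/negP: EN; apply; apply/eqP.
exact: (matching_meet Mm EM axM xE (set22 a x)).
Qed.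

End Matchings.

Section Switching.
Variables (V : finType) (e : rel V).
Hypotheses (esym : symmetric e) (eirr : irreflexive e).

Definition inside (K : {set V}) : {set {set V}} := [set E : {set V} | E \subset K].

Definition switch (M N : {set {set V}}) (K : {set V}) :=
  (M :\: inside K) :|: (N :&: inside K).

Lemma switch_matching M N (K : {set V}) : is_matching e M -> is_matching e N ->
  (forall E x, E \in M :\: N -> x \in E -> x \in K -> E \subset K) ->
  is_matching e (switch M N K).
Proof.
move=> /is_matchingP[M1 M2] /is_matchingP[N1 N2] closedK; apply/is_matchingP.
split=> [E|].
  by rewrite /switch !inE; case/orP => /andP[]; [move=> _ /M1|move=> /N1].
have mixed E F : E \in M -> E \notin inside K -> F \in N -> F \in inside K ->
    E != F -> [disjoint E & F].
  move=> EM EK FN FK EF; apply/disjoint_memP => x xE xF.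
  case EN: (E \in N); first by move: (N2 E F EN FN EF) => /disjoint_memP/(_ x xE xF).
  have := closedK E x; rewrite inE EN EM => /(_ erefl xE).
  move: FK; rewrite inE => /subsetP/(_ x xF) xK /(_ xK) EsK.
  by move: EK; rewrite inE EsK.
move=> E F; rewrite /switch !inE => /orP[/andP[EK EM]|/andP[EN EK]]
  /orP[/andP[FK FM]|/andP[FN FK]] EF.
- exact: M2.
- by apply: mixed => //; rewrite inE.
- by rewrite disjoint_sym; apply: mixed => //; rewrite ?inE // eq_sym.
- exact: N2.
Qed.

Lemma switch_card M N (K : {set V}) :
  #|switch M N K| + #|M :&: inside K| = #|M| + #|N :&: inside K|.
Proof.
have := cardsUI (M :\: inside K) (N :&: inside K).
have -> : (M :\: inside K) :&: (N :&: inside K) = set0.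
  by apply/setP => E; rewrite !inE; case: (E \subset K); rewrite ?andbF.
rewrite cards0 addn0 /switch => ->.
by rewrite -(cardsID (inside K) M); lia.
Qed.

Definition alt (M N : {set {set V}}) : rel V :=
  fun x y => (x != y) && ([set x; y] \in (M :\: N) :|: (N :\: M)).

Definition alt_comp M N v := [set x | connect (alt M N) v x].

Lemma alt_edge M N : is_matching e M -> is_matching e N -> subrel (alt M N) e.
Proof.
move=> Mm Nm a b /andP[_]; rewrite in_setU !in_setD => /orP[/andP[_ H]|/andP[_ H]].
  exact: (matching_edge esym eirr Mm H).
exact: (matching_edge esym eirr Nm H).
Qed.

Lemma alt_comp_closed M N v E x : is_matching e M -> is_matching e N ->
  E \in (M :\: N) :|: (N :\: M) -> x \in E -> x \in alt_comp M N v ->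
  E \subset alt_comp M N v.
Proof.
move=> Mm Nm EH xE; rewrite inE => cx.
have [y [exy Exy]] : exists y, e x y /\ E = [set x; y].
  move: EH; rewrite !inE => /orP[/andP[_ EM]|/andP[_ EM]].
    exact: (matching_edge_at esym Mm EM xE).
  exact: (matching_edge_at esym Nm EM xE).
have hxy : alt M N x y.
  by rewrite /alt -Exy EH andbT; apply: contraTneq exy => ->; rewrite eirr.
rewrite Exy subUset !sub1set !inE cx /=.
exact: connect_trans cx (connect1 hxy).
Qed.

Lemma switch_props M N v : is_matching e M -> #|M| = nu e ->
  is_matching e N -> #|N| = nu e -> v \notin cover N ->
  [/\ is_matching e (switch M N (alt_comp M N v)),
      #|switch M N (alt_comp M N v)| = nu e,
      v \notin cover (switch M N (alt_comp M N v)),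
      (forall E, E \in M -> ~~ (E \subset alt_comp M N v) ->
         E \in switch M N (alt_comp M N v)) &
      (forall z, z \notin alt_comp M N v -> z \notin cover M ->
         z \notin cover (switch M N (alt_comp M N v)))].
Proof.
move=> Mm cM Nm cN vN; set K := alt_comp M N v.
have clM E x : E \in M :\: N -> x \in E -> x \in K -> E \subset K.
  by move=> EH xE xK; apply: (alt_comp_closed Mm Nm _ xE xK); rewrite inE EH.
have clN E x : E \in N :\: M -> x \in E -> x \in K -> E \subset K.
  by move=> EH xE xK; apply: (alt_comp_closed Mm Nm _ xE xK); rewrite inE EH orbT.
have mMN := switch_matching Mm Nm clM; have mNM := switch_matching Nm Mm clN.
have cMN := switch_card M N K; have cNM := switch_card N M K.
have leMN := matching_le mMN; have leNM := matching_le mNM.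
have vK : v \in K by rewrite inE connect0.
split => //; first lia.
- apply/negP => /bigcupP[E]; rewrite /switch !inE => /orP[/andP[EK EM]|/andP[EN _]] vE.
    case EN: (E \in N); first by move/negP: vN; apply; apply/bigcupP; exists E.
    have := clM E v; rewrite inE EN EM => /(_ erefl vE vK) EK'.
    by move: EK; rewrite EK'.
  by move/negP: vN; apply; apply/bigcupP; exists E.
- by move=> E EM EK; rewrite /switch !inE EM EK.
- move=> z zK zM; apply/negP => /bigcupP[E]; rewrite /switch !inE =>
    /orP[/andP[_ EM]|/andP[_ EK]] zE.
    by move/negP: zM; apply; apply/bigcupP; exists E.
  by move/negP: zK; apply; move/subsetP: EK; apply.
Qed.

End Switching.

Lemma A_notin_D (V : finType) (e : rel V) a : a \in GE_A e -> a \notin GE_D e.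
Proof. by rewrite inE => /andP[]. Qed.

Lemma card_ADC (V : finType) (e : rel V) :
  #|GE_A e| + #|GE_D e| + #|GE_C e| = #|V|.
Proof.
have AD0 : GE_A e :&: GE_D e = set0.
  by apply/setP => x; rewrite in_setI in_set0; apply/negP => /andP[/A_notin_D/negP].
have := cardsC (GE_A e :|: GE_D e); rewrite -/(GE_C e) => <-.
by have := cardsUI (GE_A e) (GE_D e); rewrite AD0 cards0; lia.
Qed.

Section Forest.
Variables (V : finType) (e : rel V).
Hypotheses (esym : symmetric e) (eirr : irreflexive e).
Hypothesis acyc : forall c : seq V, 3 <= size c -> ~~ ucycleb e c.

Local Notation A := (GE_A e).
Local Notation D := (GE_D e).

(* In a forest, an edge xy is the only connection between x and y: a path in a
   subgraph h avoiding xy would close a cycle. *)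
Lemma forest_no_detour (h : rel V) x y : subrel h e ->
  connect h x y -> e x y -> ~~ h x y -> x != y -> False.
Proof.
move=> he /connectP[p hp ->] exy nh nxy.
case: (shortenP hp) exy nh nxy => p' hp' up' _ exy nh nxy.
have sz : 2 <= size p'.
  move: hp' exy nh nxy; case: p' {up'} => [|z [|z2 q]] //=; first by rewrite eqxx.
  by rewrite andbT => ->.
apply/negP: (acyc (c := x :: p') sz); rewrite /ucycleb up' andbT /=.
by rewrite rcons_path esym exy (sub_path he hp').
Qed.

(* D is independent: for adjacent u, v in D, switch a maximum matching missing
   u towards one missing v; the result misses both u and v. *)
Lemma D_independent : independent e D.
Proof.
move=> u v /GE_DP[Mu [Mum cMu uMu]] /GE_DP[Mv [Mvm cMv vMv]]; apply/negP => euv.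
have [m' c' vM' _ notc] := switch_props esym eirr Mum cMu Mvm cMv vMv.
have uK : u \notin alt_comp Mu Mv v.
  apply/negP; rewrite inE => cvu.
  apply: (forest_no_detour (alt_edge esym eirr Mum Mvm) cvu); first by rewrite esym.
    rewrite /alt in_setU !in_setD; apply/negP => /andP[_ /orP[/andP[_ H]|/andP[_ H]]].
      by move/negP: uMu; apply; apply/bigcupP; exists [set v; u]; rewrite ?set22.
    by move/negP: vMv; apply; apply/bigcupP; exists [set v; u]; rewrite ?set21.
  by apply: contraTneq euv => ->; rewrite eirr.
have [m'' c''] := add_edge m' euv (notc u uK uMu) vM'.
by move: (matching_le m''); rewrite c'' c'; lia.
Qed.

Lemma D_nbr_in_A v u : v \in D -> e v u -> u \in A.
Proof.
move=> vD evu; rewrite inE; apply/andP; split.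
  by apply: contraL evu => uD; apply: D_independent.
by apply/existsP; exists v; rewrite vD evu.
Qed.

(* A maximum matching matches every vertex of A into D: otherwise replace the
   edge a(mate a) by an edge ad with d in D, after switching towards a maximum
   matching that misses d, and mate a would be missed. *)
Lemma mate_A_in_D M a : is_matching e M -> #|M| = nu e -> a \in A ->
  mate M a \in D.
Proof.
move=> Mm cM aA; have aM := cover_notin_D Mm cM (A_notin_D aA).
move: aA; rewrite inE => /andP[aD /existsP[d /andP[dD eda]]].
have axM := mateP esym eirr Mm aM.
apply: contraT => xD.
have [N [Nm cN dN]] := GE_DP dD.
have [m' c' dM' keep _] := switch_props esym eirr Mm cM Nm cN dN.
case aK: (a \in alt_comp M N d).
  move: aK; rewrite inE => cda; exfalso.
  apply: (forest_no_detour (alt_edge esym eirr Mm Nm) cda eda).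
    rewrite /alt in_setU !in_setD; apply/negP => /andP[_ /orP[/andP[_ H]|/andP[_ H]]].
      have := mate_eq esym eirr Mm (x := a) (y := d); rewrite setUC => /(_ H) md.
      by move/negP: xD; rewrite md.
    by move/negP: dN; apply; apply/bigcupP; exists [set d; a]; rewrite ?set21.
  by apply: contraTneq eda => ->; rewrite eirr.
have axM' : [set a; mate M a] \in switch M N (alt_comp M N d).
  by apply: keep => //; apply/negP => /subsetP/(_ a (set21 _ _)); rewrite aK.
have ead : e a d by rewrite esym.
have [m2 c2 x2] := replace_edge esym eirr m' axM' ead dM'.
by move: (cover_notin_D m2 (etrans c2 c') xD); rewrite (negbTE x2).
Qed.

(* Counting the vertices covered by a maximum matching M: those outside D,
   plus the mates of the vertices of A, which lie in D. *)
Lemma matching_count : 2 * nu e + #|D| = #|A| + #|V|.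
Proof.
have [M [Mm cM]] := max_matching_exists e.
have coverA a : a \in A -> a \in cover M.
  by move=> aA; apply: cover_notin_D Mm cM (A_notin_D aA).
have coverD : cover M :&: D = [set mate M a | a in A].
  apply/setP => x; rewrite in_setI; apply/andP/imsetP.
    move=> [xM xD]; exists (mate M x); last by rewrite (mateK esym eirr Mm xM).
    exact: (D_nbr_in_A xD (matching_edge esym eirr Mm (mateP esym eirr Mm xM))).
  move=> [a aA ->]; split; last exact: (mate_A_in_D Mm cM aA).
  exact: (mate_cover esym eirr Mm (coverA a aA)).
have card_mates : #|[set mate M a | a in A]| = #|A|.
  apply: card_in_imset => a b aA bA mab.
  by rewrite -(mateK esym eirr Mm (coverA a aA)) mab (mateK esym eirr Mm (coverA b bA)).
have coverC : cover M :\: D = ~: D.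
  apply/setP => x; rewrite in_setD in_setC; case xD: (x \in D) => //=.
  by apply: cover_notin_D Mm cM _; rewrite xD.
have := card_cover eirr Mm; have := cardsID D (cover M); have := cardsC D.
by rewrite coverD coverC card_mates cM; lia.
Qed.

End Forest.

Lemma GE_bipartite (V : finType) (e : rel V) :
  GE_C e = set0 -> independent e (GE_A e) -> independent e (GE_D e) ->
  [/\ GE_A e :|: GE_D e = [set: V], [disjoint GE_A e & GE_D e] &
      forall x y, e x y ->
        (x \in GE_A e) && (y \in GE_D e) || (x \in GE_D e) && (y \in GE_A e)].
Proof.
move=> C0 indA indD.
have AD : GE_A e :|: GE_D e = [set: V] by rewrite -[LHS]setCK -/(GE_C e) C0 setC0.
split=> //; first by apply/disjoint_memP => x /A_notin_D/negP.
move=> x y exy.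
have : x \in GE_A e :|: GE_D e by rewrite AD inE.
have : y \in GE_A e :|: GE_D e by rewrite AD inE.
rewrite !in_setU => /orP[yA|yD] /orP[xA|xD].
- by move: (indA x y xA yA); rewrite exy.
- by rewrite xD yA orbT.
- by rewrite xA yD.
- by move: (indD x y xD yD); rewrite exy.
Qed.

Lemma parent_exists (V : finType) (e : rel V) (r : V) :
  (forall v, connect e r v) ->
  exists (p : V -> V) (rk : V -> nat),
    forall v, v != r -> e (p v) v && (rk (p v) < rk v).
Proof.
move=> conn.
pose reach v n := [exists s : n.-tuple V, path e r s && (last r s == v)].
have reachable v : exists n, reach v n.
  have /connectP[s ps ->] := conn v; exists (size s); apply/existsP.
  by exists (in_tuple s); rewrite /= ps eqxx.
pose rk v := ex_minn (reachable v).
have closer v : v != r -> exists u, e u v && (rk u < rk v).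
  move=> vr; rewrite /rk; case: (ex_minnP (reachable v)) => n.
  move=> /existsP[s /andP[ps /eqP ls]] _.
  move: ps ls (size_tuple s); case/lastP: (tval s) => [|q z] /=.
    by move=> _ rv; move: vr; rewrite rv eqxx.
  rewrite rcons_path last_rcons size_rcons => /andP[pq eq] zv sz.
  exists (last r q); rewrite -zv eq /=.
  case: (ex_minnP (reachable (last r q))) => m _ /(_ (size q)) H.
  apply: leq_ltn_trans (H _) _; last by rewrite -sz.
  by apply/existsP; exists (in_tuple q); rewrite /= pq eqxx.
exists (fun v => odflt v [pick u | e u v && (rk u < rk v)]), rk => v vr /=.
case: pickP => [u //|none].
by have [u /andP[eu lu]] := closer v vr; move: (none u); rewrite eu lu.
Qed.

Section Rooted.
Variables (V : finType) (e : rel V).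
Hypotheses (esym : symmetric e) (eirr : irreflexive e).
Hypothesis acyc : forall c : seq V, 3 <= size c -> ~~ ucycleb e c.
Hypothesis degA : forall v, v \in GE_A e -> deg e v <= 3.

Local Notation A := (GE_A e).
Local Notation D := (GE_D e).

Variables (r : V) (p : V -> V) (rk : V -> nat).
Hypothesis rD : r \in D.
Hypothesis parentP : forall v, v != r -> e (p v) v && (rk (p v) < rk v).

Definition children a := [set v | (v != r) && (p v == a)].

Definition A_children := [set v | (v != r) && (p v \in A)].

Lemma A_neq_root a : a \in A -> a != r.
Proof. by move=> aA; apply: contraNneq (A_notin_D aA) => ->. Qed.

Lemma children_parent_nbhd a : a != r -> children a :|: [set p a] \subset [set u | e a u].
Proof.
move=> ar; apply/subsetP => v; rewrite !inE => /orP[/andP[vr /eqP pv]|/eqP->].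
  by move: (parentP vr) => /andP[]; rewrite pv.
by move: (parentP ar) => /andP[]; rewrite esym.
Qed.

Lemma card_children_parent a : a != r -> #|children a :|: [set p a]| = #|children a|.+1.
Proof.
move=> ar; rewrite setUC cardsU1; suff -> : p a \notin children a by [].
rewrite !inE; apply/negP => /andP[par /eqP ppa].
by move: (parentP par) (parentP ar); rewrite ppa => /andP[_ l1] /andP[_ l2]; lia.
Qed.

Lemma card_children_le a : a \in A -> #|children a| <= 2.
Proof.
move=> aA; have ar := A_neq_root aA.
have := subset_leq_card (children_parent_nbhd ar); rewrite card_children_parent //.
by have := degA aA; rewrite /deg; lia.
Qed.

Lemma card_A_children : #|A_children| = \sum_(a in A) #|children a|.
Proof.
rewrite -sum1_card (partition_big p (fun a => a \in A)) /=; last first.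
  by move=> v; rewrite inE => /andP[].
apply: eq_bigr => a aA; rewrite -sum1_card; apply: eq_bigl => v.
by rewrite [_ \in A_children]inE [_ \in children a]inE; case: (p v =P a) => [->|]; rewrite ?aA ?andbT ?andbF.
Qed.

(* The parent of a vertex of D is in A, since D is independent. *)
Lemma D_sub_A_children : D :\ r \subset A_children.
Proof.
apply/subsetP => v; rewrite in_setD1 [_ \in A_children]inE => /andP[vr vD]; rewrite vr /=.
by apply: (D_nbr_in_A esym eirr acyc vD); move: (parentP vr) => /andP[]; rewrite esym.
Qed.

Lemma sum_children_le : \sum_(a in A) #|children a| <= #|A| * 2.
Proof. by rewrite -sum_nat_const; apply: leq_sum => a aA; apply: card_children_le. Qed.

Lemma card_D_le : #|D| <= (2 * #|A|).+1.
Proof.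
have := subset_leq_card D_sub_A_children; have := cardsD1 r D.
by have := sum_children_le; rewrite rD card_A_children; lia.
Qed.

Hypothesis D_tight : #|D| = (2 * #|A|).+1.

Lemma A_children_eq : A_children = D :\ r.
Proof.
apply/eqP; rewrite eq_sym eqEcard D_sub_A_children /= card_A_children.
by have := sum_children_le; have := cardsD1 r D; rewrite rD; lia.
Qed.

(* The bounds |children b| <= 2 add up to an equality, so each is one. *)
Lemma card_children_tight a : a \in A -> #|children a| = 2.
Proof.
have [_] := leqif_sum (fun b bA => leqif_eq (card_children_le (a := b) bA)).
rewrite sum_nat_const -card_A_children A_children_eq.
have := cardsD1 r D; rewrite rD => cD.
have -> : #|D :\ r| == #|A| * 2 by apply/eqP; lia.
move=> all2 aA; apply/eqP.
by move: (Logic.eq_sym all2) => /forall_inP/(_ a aA).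
Qed.

Lemma nbhd_A a : a \in A -> [set u | e a u] = children a :|: [set p a].
Proof.
move=> aA; have ar := A_neq_root aA.
apply/eqP; rewrite eq_sym eqEcard children_parent_nbhd //=.
by rewrite card_children_parent // card_children_tight //; have := degA aA.
Qed.

Lemma deg_A a : a \in A -> deg e a = 3.
Proof.
move=> aA; rewrite /deg nbhd_A // card_children_parent ?card_children_tight //.
exact: A_neq_root.
Qed.

(* An edge inside A would make one of its ends a child of the other, but all
   children of vertices of A lie in D. *)
Lemma A_independent : independent e A.
Proof.
have notA_child v : v \in A -> v \notin A_children.
  by move=> vA; rewrite A_children_eq in_setD1 (negbTE (A_notin_D vA)) andbF.
move=> a b aA bA; apply/negP => eab.
have : b \in [set u | e a u] by rewrite inE.
rewrite nbhd_A // in_setU in_set1 inE => /orP[/andP[br /eqP pb]|/eqP bp].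
  by move/negP: (notA_child b bA); apply; rewrite inE br pb aA.
by move/negP: (notA_child a aA); apply; rewrite inE (A_neq_root aA) -bp bA.
Qed.

End Rooted.

Theorem lemma1 (V : finType) (e : rel V) :
  in_calT e ->
  [/\ GE_C e = set0,
      independent e (GE_A e),
      (forall v, v \in GE_A e -> deg e v = 3),
      nu e = #|GE_A e| &
      (* bipartite with partite sets A_T and D_T *)
      [/\ GE_A e :|: GE_D e = [set: V], [disjoint GE_A e & GE_D e] &
          forall x y, e x y ->
            (x \in GE_A e) && (y \in GE_D e) || (x \in GE_D e) && (y \in GE_A e)]].
Proof.
move=> [[[esym eirr] conn acyc] degA n_eq].
have count := matching_count esym eirr acyc.
have part := card_ADC e.
have [r rD] : exists r, r \in GE_D e by apply/set0Pn; rewrite -card_gt0; lia.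
have [p [rk parentP]] := parent_exists (conn r).
have D_le := card_D_le esym eirr acyc degA rD parentP.
have D_tight : #|GE_D e| = (2 * #|GE_A e|).+1 by lia.
have C0 : GE_C e = set0 by apply: cards0_eq; lia.
have indA := A_independent esym eirr acyc degA rD parentP D_tight.
split=> //.
- by move=> v; apply: (deg_A esym eirr acyc degA rD parentP D_tight).
- lia.
- exact: (GE_bipartite C0 indA (D_independent esym eirr acyc)).
Qed.
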